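(* Let $n\ge3$, $t_1<\dots<t_n$, and for $j=1,\dots,n-1$ let $\lambda_{0,j}\le0\le\lambda_{1,j}$ be real and $\varphi_j=\Phi_{(\lambda_{0,j},\lambda_{1,j})}$. Let $H_1,\dots,H_n$ be the generalized hat functions built from $\varphi_1,\dots,\varphi_{n-1}$ and $t_1<\dots<t_n$. Then $0\le\sum_{j=1}^nH_j(t)\le1$ for all $t\in[t_1,t_n]$.
   Context: $\Phi_{(\lambda_0,\lambda_1)}$ is the unique solution of $(\frac{d}{dt}-\lambda_0)(\frac{d}{dt}-\lambda_1)u=0$ with $u(0)=0$, $u'(0)=1$ (it is strictly increasing on $\mathbb{R}$ when $\lambda_0\le0\le\lambda_1$). Generalized hat functions: for $2\le j\le n-1$, $H_j(t)=\frac{\varphi_{j-1}(t-t_{j-1})}{\varphi_{j-1}(t_j-t_{j-1})}$ on $[t_{j-1},t_j]$, $H_j(t)=\frac{\varphi_j(t-t_{j+1})}{\varphi_j(t_j-t_{j+1})}$ on $[t_j,t_{j+1}]$, and $0$ elsewhere on $[t_1,t_n]$; $H_1(t)=\frac{\varphi_1(t-t_2)}{\varphi_1(t_1-t_2)}$ on $[t_1,t_2]$ and $0$ elsewhere; $H_n(t)=\frac{\varphi_{n-1}(t-t_{n-1})}{\varphi_{n-1}(t_n-t_{n-1})}$ on $[t_{n-1},t_n]$ and $0$ elsewhere. *)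

From Stdlib Require Import Reals.
From Coquelicot Require Import Coquelicot.
Open Scope R_scope.

(* u is the solution of (d/dt - l0)(d/dt - l1) u = 0, u(0)=0, u'(0)=1,
   i.e. u'' - (l0+l1) u' + l0 l1 u = 0 on R (u twice differentiable).
   Such a solution exists and is unique; this predicate pins down
   Phi_(l0,l1). *)
Definition IsPhi (l0 l1 : R) (u : R -> R) : Prop :=
  (forall t, ex_derive u t) /\
  (forall t, ex_derive (Derive u) t) /\
  (forall t, Derive (Derive u) t - (l0 + l1) * Derive u t + l0 * l1 * u t = 0) /\
  u 0 = 0 /\ Derive u 0 = 1.

Definition hat (n : nat) (t : nat -> R) (phi : nat -> R -> R) (j : nat) (x : R) : R :=
  if Nat.eqb j 1 then
    (if Rle_dec (t 1%nat) x then if Rle_dec x (t 2%nat) then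
       phi 1%nat (x - t 2%nat) / phi 1%nat (t 1%nat - t 2%nat) else 0 else 0)
  else if Nat.eqb j n then
    (if Rle_dec (t (n-1)%nat) x then if Rle_dec x (t n) then
       phi (n-1)%nat (x - t (n-1)%nat) / phi (n-1)%nat (t n - t (n-1)%nat) else 0 else 0)
  else
    (if Rle_dec (t (j-1)%nat) x then
       if Rle_dec x (t j) then
         phi (j-1)%nat (x - t (j-1)%nat) / phi (j-1)%nat (t j - t (j-1)%nat)
       else if Rle_dec x (t (S j)) then
         phi j (x - t (S j)) / phi j (t j - t (S j))
       else 0
     else 0).

Definition hat_sum (n : nat) (t : nat -> R) (phi : nat -> R -> R) (x : R) : R :=
  sum_f_R0 (fun k => hat n t phi (S k) x) (n - 1).

From Stdlib Require Import Reals Lra Lia Psatz.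
From Coquelicot Require Import Coquelicot.
Open Scope R_scope.

(* Write L = (d/ds - a)(d/ds - b), so that phi = Phi_(a,b) solves L phi = 0 with
   phi(0) = 0, phi'(0) = 1.  Everything rests on the factorisation of L: for a twice
   differentiable w, e^{-as} (w' - b w) has derivative e^{-as} (L w), and e^{-bs} w
   has derivative e^{-bs} (w' - b w).
   - Applied to phi this gives phi' - b phi = e^{as} > 0, so e^{-bs} phi is increasing
     and phi has the sign of its argument (for any real a, b).
   - For a <= 0 <= b we prove a maximum principle: L w >= 0 and w(p) = w(q) = 0 force
     w <= 0 on [p, q] (two mean-value points would contradict the monotonicity of
     e^{-as} (w' - b w)).  Applied to w(x) = phi(x-q)/phi(p-q) + phi(x-p)/phi(q-p) - 1,
     for which L w = -ab >= 0, it bounds by 1 the sum of the two hat pieces living on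
     one knot interval [p, q]; the sign of phi shows that this sum is nonnegative.
   - On [t_k, t_{k+1}] only H_k and H_{k+1} are nonzero, and they are exactly these two
     pieces for phi_k, which yields the theorem. *)

Lemma mean_value (f df : R -> R) x y :
  (forall z, is_derive f z (df z)) -> x < y ->
  exists c, x < c < y /\ f y - f x = df c * (y - x).
Proof.
  intros Hd Hxy.
  destruct (MVT_cor2 f df x y Hxy) as [c [E Hc]].
  - intros c _. apply is_derive_Reals, Hd.
  - exists c. split; assumption.
Qed.

Lemma nondecreasing_of_deriv (f df : R -> R) :
  (forall z, is_derive f z (df z)) -> (forall z, 0 <= df z) ->
  forall x y, x <= y -> f x <= f y.
Proof.
  intros Hd Hpos x y Hxy.
  destruct (Req_dec x y) as [<- | Hne]; [lra |].
  destruct (mean_value f df x y Hd ltac:(lra)) as [c [_ E]].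
  specialize (Hpos c). nra.
Qed.

Lemma increasing_of_deriv (f df : R -> R) :
  (forall z, is_derive f z (df z)) -> (forall z, 0 < df z) ->
  forall x y, x < y -> f x < f y.
Proof.
  intros Hd Hpos x y Hxy.
  destruct (mean_value f df x y Hd Hxy) as [c [_ E]].
  specialize (Hpos c). nra.
Qed.

Lemma constant_of_deriv_zero (f df : R -> R) :
  (forall z, is_derive f z (df z)) -> (forall z, df z = 0) ->
  forall x, f x = f 0.
Proof.
  intros Hd H0 x.
  destruct (Rtotal_order x 0) as [Hx | [-> | Hx]]; [| reflexivity |].
  - destruct (mean_value f df x 0 Hd Hx) as [c [_ E]]. rewrite H0 in E. lra.
  - destruct (mean_value f df 0 x Hd Hx) as [c [_ E]]. rewrite H0 in E. lra.
Qed.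

Lemma is_derive_exp_weight a (g dg : R -> R) s :
  is_derive g s (dg s) ->
  is_derive (fun s => exp (- a * s) * g s) s (exp (- a * s) * (dg s - a * g s)).
Proof.
  intros Hg. auto_derive.
  - exists (dg s). exact Hg.
  - replace (Derive (fun x : R => g x) s) with (dg s)
      by (symmetry; now apply is_derive_unique).
    ring.
Qed.

Lemma is_derive_factored a b (w dw ddw : R -> R) s :
  is_derive w s (dw s) -> is_derive dw s (ddw s) ->
  is_derive (fun s => exp (- a * s) * (dw s - b * w s)) s
    (exp (- a * s) * (ddw s - (a + b) * dw s + a * b * w s)).
Proof.
  intros Hw Hdw.
  replace (ddw s - (a + b) * dw s + a * b * w s)
    with (ddw s - b * dw s - a * (dw s - b * w s)) by ring.
  apply (is_derive_exp_weight a (fun s => dw s - b * w s) (fun s => ddw s - b * dw s)).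
  exact (is_derive_minus dw (fun z => b * w z) s _ _ Hdw (is_derive_scal w s b _ Hw)).
Qed.

(* Were w(x) > 0, the mean value theorem applied to
   e^{-bs} w on [p, x] and [x, q] would give c < d with w' - b w positive at c and
   negative at d, contradicting that e^{-as} (w' - b w) is nondecreasing. *)
Lemma max_principle a b (w dw ddw : R -> R) p q :
  (forall s, is_derive w s (dw s)) -> (forall s, is_derive dw s (ddw s)) ->
  (forall s, 0 <= ddw s - (a + b) * dw s + a * b * w s) ->
  w p = 0 -> w q = 0 -> forall x, p <= x <= q -> w x <= 0.
Proof.
  intros Hw Hdw HL Hp Hq x Hx.
  set (v := fun s => dw s - b * w s).
  assert (Hmono : forall c d, c <= d -> exp (- a * c) * v c <= exp (- a * d) * v d).
  { apply (nondecreasing_of_deriv _ _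
             (fun z => is_derive_factored a b w dw ddw z (Hw z) (Hdw z))).
    intro z. apply Rmult_le_pos; [left; apply exp_pos | apply HL]. }
  set (F := fun s => exp (- b * s) * w s).
  assert (HF : forall z, is_derive F z (exp (- b * z) * v z))
    by (intro z; apply is_derive_exp_weight, Hw).
  destruct (Rle_dec (w x) 0) as [| Hpos]; [assumption | exfalso].
  assert (Hpx : p < x) by (destruct (Req_dec p x) as [<- |]; lra).
  assert (Hxq : x < q) by (destruct (Req_dec x q) as [-> |]; lra).
  assert (HFx : 0 < F x) by (unfold F; pose proof (exp_pos (- b * x)); nra).
  destruct (mean_value F _ p x HF Hpx) as [c [Hc Ec]].
  destruct (mean_value F _ x q HF Hxq) as [d [Hd Ed]].
  unfold F in Ec, Ed. rewrite Hp in Ec. rewrite Hq in Ed.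
  pose proof (exp_pos (- b * c)). pose proof (exp_pos (- b * d)).
  assert (Hvc : 0 < v c).
  { assert (0 < exp (- b * c) * v c)
      by (apply (Rmult_lt_reg_r (x - p)); [lra | unfold F in HFx; lra]).
    nra. }
  assert (Hvd : v d < 0).
  { assert (exp (- b * d) * v d < 0)
      by (apply (Rmult_lt_reg_r (q - x)); [lra | unfold F in HFx; lra]).
    nra. }
  pose proof (Hmono c d ltac:(lra)).
  pose proof (exp_pos (- a * c)). pose proof (exp_pos (- a * d)).
  nra.
Qed.

(* Integrating L phi = 0 once: phi' - b phi = e^{as}. *)
Lemma Phi_first_order a b phi :
  IsPhi a b phi -> forall s, Derive phi s - b * phi s = exp (a * s).
Proof.
  intros [Hd1 [Hd2 [HL [H0 H1]]]] s.
  assert (Hconst : forall s, exp (- a * s) * (Derive phi s - b * phi s) = 1).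
  { intro z.
    rewrite (constant_of_deriv_zero _ _
               (fun y => is_derive_factored a b phi (Derive phi) (Derive (Derive phi)) y
                           (Derive_correct _ _ (Hd1 y)) (Derive_correct _ _ (Hd2 y)))).
    - rewrite H0, H1, Rmult_0_r, exp_0. ring.
    - intro y. rewrite HL. ring. }
  assert (Hinv : exp (a * s) * exp (- a * s) = 1).
  { rewrite <- exp_plus. replace (a * s + - a * s) with 0 by ring. apply exp_0. }
  rewrite <- (Rmult_1_l (Derive phi s - b * phi s)), <- Hinv, Rmult_assoc, Hconst.
  ring.
Qed.

(* phi has the sign of its argument: e^{-bs} phi(s) is increasing and vanishes at 0. *)
Lemma Phi_sign a b phi :
  IsPhi a b phi -> forall s, (0 < s -> 0 < phi s) /\ (s < 0 -> phi s < 0).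
Proof.
  intros Hphi.
  pose proof Hphi as [Hd1 [_ [_ [H0 _]]]].
  assert (Hincr : forall x y, x < y -> exp (- b * x) * phi x < exp (- b * y) * phi y).
  { apply (increasing_of_deriv _ _
             (fun z => is_derive_exp_weight b phi (Derive phi) z (Derive_correct _ _ (Hd1 z)))).
    intro z. rewrite (Phi_first_order a b phi Hphi). apply Rmult_lt_0_compat; apply exp_pos. }
  intro s. pose proof (exp_pos (- b * s)). split; intro Hs.
  - pose proof (Hincr 0 s Hs). rewrite H0 in *. nra.
  - pose proof (Hincr s 0 Hs). rewrite H0 in *. nra.
Qed.

Corollary Phi_neq0 a b phi : IsPhi a b phi -> forall s, s <> 0 -> phi s <> 0.
Proof.
  intros Hphi s Hs. destruct (Phi_sign a b phi Hphi s) as [Hpos Hneg].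
  destruct (Rtotal_order s 0) as [H | [H | H]]; [specialize (Hneg H) | contradiction |
    specialize (Hpos H)]; lra.
Qed.

Lemma hat_pieces_bounds a b phi p q x :
  a <= 0 <= b -> IsPhi a b phi -> p < q -> p <= x <= q ->
  0 <= phi (x - q) / phi (p - q) + phi (x - p) / phi (q - p) <= 1.
Proof.
  intros Hab Hphi Hpq Hx.
  pose proof (Phi_sign a b phi Hphi) as Hsign.
  pose proof Hphi as [Hd1 [Hd2 [HL [H0 _]]]].
  assert (Hneg : phi (p - q) < 0) by (apply Hsign; lra).
  assert (Hpos : 0 < phi (q - p)) by (apply Hsign; lra).
  set (c1 := / phi (p - q)). set (c2 := / phi (q - p)).
  assert (Hc1 : c1 < 0) by (apply Rinv_lt_0_compat; assumption).
  assert (Hc2 : 0 < c2) by (apply Rinv_0_lt_compat; assumption).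
  unfold Rdiv. fold c1 c2. split.
  - assert (phi (x - q) <= 0).
    { destruct (Req_dec x q) as [-> | ]; [rewrite Rminus_diag, H0; lra |].
      left; apply Hsign; lra. }
    assert (0 <= phi (x - p)).
    { destruct (Req_dec x p) as [-> | ]; [rewrite Rminus_diag, H0; lra |].
      left; apply Hsign; lra. }
    nra.
  - set (w := fun s => c1 * phi (s - q) + c2 * phi (s - p) - 1).
    set (dw := fun s => c1 * Derive phi (s - q) + c2 * Derive phi (s - p)).
    set (ddw := fun s => c1 * Derive (Derive phi) (s - q) + c2 * Derive (Derive phi) (s - p)).
    assert (Hw : forall s, is_derive w s (dw s)).
    { intro s. unfold w, dw. auto_derive; [repeat split; apply Hd1 |].
      rewrite !Rmult_1_l. reflexivity. }
    assert (Hdw : forall s, is_derive dw s (ddw s)).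
    { intro s. unfold dw, ddw. auto_derive; [repeat split; apply Hd2 |].
      rewrite !Rmult_1_l. reflexivity. }
    assert (HLw : forall s, 0 <= ddw s - (a + b) * dw s + a * b * w s).
    { intro s. unfold w, dw, ddw.
      replace (_ - _ + _) with
        (c1 * (Derive (Derive phi) (s - q) - (a + b) * Derive phi (s - q) + a * b * phi (s - q))
         + c2 * (Derive (Derive phi) (s - p) - (a + b) * Derive phi (s - p) + a * b * phi (s - p))
         - a * b) by ring.
      rewrite !HL. nra. }
    assert (Hwp : w p = 0).
    { unfold w, c1, c2. rewrite Rminus_diag, H0. field. lra. }
    assert (Hwq : w q = 0).
    { unfold w, c1, c2. rewrite Rminus_diag, H0. field. lra. }
    pose proof (max_principle a b w dw ddw p q Hw Hdw HLw Hwp Hwq x Hx).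
    unfold w in *. lra.
Qed.

Lemma sum_f_R0_two_terms (f : nat -> R) p N :
  (S p <= N)%nat -> (forall i, (i <= N)%nat -> i <> p -> i <> S p -> f i = 0) ->
  sum_f_R0 f N = f p + f (S p).
Proof.
  induction N as [| N IH]; intros HN Hzero; [lia |]. simpl.
  destruct (Nat.eq_dec p N) as [-> | Hne].
  - destruct N as [| N]; simpl; [ring |].
    rewrite sum_eq_R0; [ring |]. intros i Hi. apply Hzero; lia.
  - rewrite IH, (Hzero (S N)); [ring | lia | lia | lia | lia |].
    intros i Hi. apply Hzero. lia.
Qed.

Section HatFunctions.

Variables (n : nat) (t : nat -> R) (phi : nat -> R -> R).
Hypothesis n_ge3 : (3 <= n)%nat.
Hypothesis knots_incr : forall i, (1 <= i)%nat -> (i < n)%nat -> t i < t (S i).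

Lemma knots_lt i j : (1 <= i)%nat -> (i < j)%nat -> (j <= n)%nat -> t i < t j.
Proof.
  intros Hi Hij Hj. induction j as [| j IH]; [lia |].
  destruct (Nat.eq_dec i j) as [-> | Hne]; [apply knots_incr; lia |].
  apply Rlt_trans with (t j); [apply IH | apply knots_incr]; lia.
Qed.

Lemma knots_le i j : (1 <= i)%nat -> (i <= j)%nat -> (j <= n)%nat -> t i <= t j.
Proof.
  intros Hi Hij Hj. destruct (Nat.eq_dec i j) as [-> | Hne]; [lra |].
  left. apply knots_lt; lia.
Qed.

Lemma knot_interval x :
  t 1%nat <= x <= t n -> exists k, (1 <= k <= n - 1)%nat /\ t k <= x <= t (S k).
Proof.
  intros Hx.
  assert (Hcover : forall m, (1 <= m)%nat -> x <= t (S m) ->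
            exists k, (1 <= k <= m)%nat /\ t k <= x <= t (S k)).
  { induction m as [| m IH]; intros Hm Hxm; [lia |].
    destruct (Nat.eq_dec m 0) as [-> | Hm0]; [exists 1%nat; split; [lia | lra] |].
    destruct (Rle_dec x (t (S m))) as [Hle | Hgt].
    - destruct (IH ltac:(lia) Hle) as [k [Hk Hxk]]. exists k. split; [lia | exact Hxk].
    - exists (S m). split; [lia | lra]. }
  destruct (Hcover (n - 1)%nat ltac:(lia)) as [k Hk].
  - replace (S (n - 1)) with n by lia. lra.
  - exists k. exact Hk.
Qed.

Hypothesis phi_zero : forall j, (1 <= j)%nat -> (j <= n - 1)%nat -> phi j 0 = 0.
Hypothesis phi_nonzero :
  forall j, (1 <= j)%nat -> (j <= n - 1)%nat -> forall s, s <> 0 -> phi j s <> 0.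

Lemma hat_piece_at_knot i y c :
  (1 <= i <= n - 1)%nat -> y = 0 -> phi i y / c = 0.
Proof. intros Hi ->. rewrite phi_zero by lia. unfold Rdiv. ring. Qed.

Variables (k : nat) (x : R).
Hypothesis k_range : (1 <= k <= n - 1)%nat.
Hypothesis x_in : t k <= x <= t (S k).

Lemma hat_left_end :
  hat n t phi k x = phi k (x - t (S k)) / phi k (t k - t (S k)).
Proof.
  unfold hat. destruct (Nat.eqb_spec k 1) as [-> | Hk1].
  - destruct (Rle_dec (t 1%nat) x); [| lra].
    destruct (Rle_dec x (t 2%nat)); [reflexivity | lra].
  - destruct (Nat.eqb_spec k n) as [| _]; [lia |].
    pose proof (knots_le (k - 1) k ltac:(lia) ltac:(lia) ltac:(lia)).
    destruct (Rle_dec (t (k - 1)%nat) x) as [_ | Hc]; [| lra].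
    destruct (Rle_dec x (t k)) as [Hxk | Hxk].
    + (* x = t_k, where both pieces take the value 1 *)
      assert (Ex : x = t k) by lra. rewrite Ex.
      pose proof (knots_lt (k - 1) k ltac:(lia) ltac:(lia) ltac:(lia)).
      pose proof (knots_lt k (S k) ltac:(lia) ltac:(lia) ltac:(lia)).
      rewrite !Rdiv_diag; [reflexivity | |]; apply phi_nonzero; lia || lra.
    + destruct (Rle_dec x (t (S k))); [reflexivity | lra].
Qed.

Lemma hat_right_end :
  hat n t phi (S k) x = phi k (x - t k) / phi k (t (S k) - t k).
Proof.
  unfold hat. destruct (Nat.eqb_spec (S k) 1) as [| _]; [lia |].
  destruct (Nat.eqb_spec (S k) n) as [En | Hn].
  - replace (n - 1)%nat with k by lia. rewrite <- En.
    destruct (Rle_dec (t k) x); [| lra]. destruct (Rle_dec x (t (S k))); [reflexivity | lra].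
  - replace (S k - 1)%nat with k by lia.
    destruct (Rle_dec (t k) x); [| lra]. destruct (Rle_dec x (t (S k))); [reflexivity | lra].
Qed.

Lemma hat_zero_before j : (1 <= j)%nat -> (j < k)%nat -> hat n t phi j x = 0.
Proof.
  intros Hj1 Hjk. unfold hat.
  pose proof (knots_le (S j) k ltac:(lia) ltac:(lia) ltac:(lia)).
  destruct (Nat.eqb_spec j 1) as [-> | Hj].
  - destruct (Rle_dec (t 1%nat) x); [| reflexivity].
    destruct (Rle_dec x (t 2%nat)); [| reflexivity].
    apply hat_piece_at_knot; [lia | lra].
  - destruct (Nat.eqb_spec j n) as [| _]; [lia |].
    pose proof (knots_lt j (S j) ltac:(lia) ltac:(lia) ltac:(lia)).
    destruct (Rle_dec (t (j - 1)%nat) x); [| reflexivity].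
    destruct (Rle_dec x (t j)); [lra |].
    destruct (Rle_dec x (t (S j))); [| reflexivity].
    apply hat_piece_at_knot; [lia | lra].
Qed.

Lemma hat_zero_after j : (S (S k) <= j)%nat -> (j <= n)%nat -> hat n t phi j x = 0.
Proof.
  intros Hkj Hjn. unfold hat.
  pose proof (knots_le (S k) (j - 1) ltac:(lia) ltac:(lia) ltac:(lia)).
  destruct (Nat.eqb_spec j 1) as [| _]; [lia |].
  destruct (Nat.eqb_spec j n) as [-> | Hj].
  - destruct (Rle_dec (t (n - 1)%nat) x); [| reflexivity].
    destruct (Rle_dec x (t n)); [| reflexivity].
    apply hat_piece_at_knot; [lia | lra].
  - pose proof (knots_lt (j - 1) j ltac:(lia) ltac:(lia) ltac:(lia)).
    destruct (Rle_dec (t (j - 1)%nat) x); [| reflexivity].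
    destruct (Rle_dec x (t j)); [| lra].
    apply hat_piece_at_knot; [lia | lra].
Qed.

Lemma hat_sum_on_interval :
  hat_sum n t phi x =
    phi k (x - t (S k)) / phi k (t k - t (S k)) + phi k (x - t k) / phi k (t (S k) - t k).
Proof.
  unfold hat_sum.
  rewrite (sum_f_R0_two_terms _ (k - 1) (n - 1)); [| lia |].
  - replace (S (k - 1)) with k by lia.
    rewrite hat_left_end, hat_right_end. reflexivity.
  - intros i Hi Hik HiSk.
    destruct (Nat.lt_ge_cases (S i) k).
    + apply hat_zero_before; lia.
    + apply hat_zero_after; lia.
Qed.

End HatFunctions.

Theorem mainTheorem11 (n : nat) (t : nat -> R) (l0 l1 : nat -> R)
  (phi : nat -> R -> R) :
  (3 <= n)%nat ->
  (forall i, (1 <= i)%nat -> (i < n)%nat -> t i < t (S i)) ->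
  (forall j, (1 <= j)%nat -> (j <= n - 1)%nat ->
     l0 j <= 0 <= l1 j /\ IsPhi (l0 j) (l1 j) (phi j)) ->
  forall x, t 1%nat <= x <= t n ->
    0 <= hat_sum n t phi x <= 1.
Proof.
  intros Hn Ht Hphi x Hx.
  assert (phi_zero : forall j, (1 <= j)%nat -> (j <= n - 1)%nat -> phi j 0 = 0)
    by (intros j H1 H2; destruct (Hphi j H1 H2) as [_ [_ [_ [_ [H0 _]]]]]; exact H0).
  assert (phi_nonzero : forall j, (1 <= j)%nat -> (j <= n - 1)%nat ->
                          forall s, s <> 0 -> phi j s <> 0)
    by (intros j H1 H2; apply (Phi_neq0 (l0 j) (l1 j)), (Hphi j H1 H2)).
  destruct (knot_interval n t Hn x Hx) as [k [Hk Hxk]].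
  rewrite (hat_sum_on_interval n t phi Hn Ht phi_zero phi_nonzero k x Hk Hxk).
  destruct (Hphi k ltac:(lia) ltac:(lia)) as [Hl HIs].
  apply (hat_pieces_bounds (l0 k) (l1 k)); [exact Hl | exact HIs | | exact Hxk].
  apply Ht; lia.
Qed.
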